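(* For every positive integer $n$, there exists a top-balanced permutation sequence of length $n$; that is, there exist bijections $\pi_1,\ldots,\pi_n : N \to [n]$ such that for every day $t \in [n]$ and every player $i \in N$ we have $Z_i^t[1] \le \lceil n/t \rceil$.
   Context: Let $n$ be a positive integer, $N$ a set of $n$ players and $[n]=\{1,\ldots,n\}$ a set of $n$ items, where smaller numbers denote better items. A permutation sequence of length $n$ is an ordered tuple $(\pi_1,\ldots,\pi_n)$ of bijections $\pi_t : N\to[n]$; on day $t$ player $i$ receives item $\pi_t(i)$. For $t\in[n]$ and $i\in N$, $Z_i^t$ denotes the multiset $\{\pi_1(i),\ldots,\pi_t(i)\}$, and for $j\in[t]$, $Z_i^t[j]$ denotes the $j$-th smallest element of $Z_i^t$ (counted with multiplicity), so $Z_i^t[1]$ is the best item $i$ received in the first $t$ days. *)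

From mathcomp Require Import all_boot fingroup perm.
Set Implicit Arguments. Unset Strict Implicit. Unset Printing Implicit Defensive.

(* Players N := 'I_n, items [n] = {1..n}; item k is represented by the ordinal
   k-1 : 'I_n, so the item number of o : 'I_n is o.+1.
   A permutation sequence of length n: day d : 'I_n (day d.+1) gets a bijection
   pi d : {perm 'I_n} (players -> item indices). *)

Definition item_of (n : nat) (o : 'I_n) : nat := o.+1.

Definition Zseq (n : nat) (pi : 'I_n -> {perm 'I_n}) (t : nat) (i : 'I_n)
  : seq nat :=
  map (fun d : 'I_n => item_of (pi d i)) (filter (fun d : 'I_n => d < t) (enum 'I_n)).

Definition Zth (n : nat) (pi : 'I_n -> {perm 'I_n}) (t : nat) (i : 'I_n)
  (j : nat) : nat :=
  nth 0 (sort leq (Zseq pi t i)) j.-1.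

Definition ceil_div (a b : nat) : nat := (a + b - 1) %/ b.

Definition top_balanced (n : nat) (pi : 'I_n -> {perm 'I_n}) : Prop :=
  forall (t : nat) (i : 'I_n), 1 <= t <= n -> Zth pi t i 1 <= ceil_div n t.

From mathcomp Require Import all_boot fingroup perm.
From mathcomp Require Import zify.

Set Implicit Arguments. Unset Strict Implicit. Unset Printing Implicit Defensive.

(* Greedy construction: every day, rank the players by their best item so far,
   worst-off first, and hand out the items in that order. Let b_t(i) be the
   best item index of i after t days. The v players served items below v either
   all have b_t >= v, or include every player with b_t >= v; either way the set
   of players with b_t >= v loses at least v members per day. So at most
   n - v t players have b_t >= v, and taking v = b_t(i) gives b_t(i) t < n,
   i.e. b_t(i) + 1 <= ceil(n/t). *)

Section RankPerm.
Variables (n : nat) (r : rel 'I_n).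
Hypotheses (r_irr : irreflexive r) (r_trans : transitive r)
  (r_total : forall i j, i != j -> r i j || r j i).

Lemma card_r_pred_lt i : #|[set j | r j i]| < n.
Proof.
rewrite -[X in _ < X]card_ord -cardsT; apply: proper_card.
by apply/properP; split; [exact: subsetT | exists i; rewrite !inE ?r_irr].
Qed.

Definition rank i : 'I_n := Ordinal (card_r_pred_lt i).

Lemma rank_mono : {homo rank : i j / r i j >-> i < j}.
Proof.
move=> i j rij /=; apply: proper_card; apply/properP; split.
  by apply/subsetP => k; rewrite !inE => /r_trans; apply.
by exists i; rewrite !inE ?r_irr.
Qed.

Lemma rank_inj : injective rank.
Proof.
move=> i j eq_ij; apply: contra_eq (ltnn (rank j)) => /r_total.
by case/orP => /rank_mono; rewrite eq_ij => ->.
Qed.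

Definition rank_perm : {perm 'I_n} := perm rank_inj.

Lemma rank_permE i : rank_perm i = rank i.
Proof. by rewrite permE. Qed.

End RankPerm.

Lemma card_ord_lt n v : v <= n -> #|[set o : 'I_n | o < v]| = v.
Proof.
move=> le_vn; have widen_inj : injective (widen_ord le_vn).
  by move=> a b /(congr1 val) /= /val_inj.
rewrite -[RHS]card_ord -(card_imset _ widen_inj).
apply: eq_card => o; rewrite inE; apply/idP/imsetP => [lt_ov | [o' _ ->]].
  by exists (Ordinal lt_ov) => //; apply: val_inj.
exact: (ltn_ord o').
Qed.

Lemma card_perm_lt n (p : {perm 'I_n}) v : v <= n -> #|[set i | p i < v]| = v.
Proof.
move=> le_vn; rewrite -[RHS](card_ord_lt le_vn).
rewrite -(card_preimset [set o : 'I_n | o < v] (@perm_inj _ p)).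
by apply: eq_card => i; rewrite !inE.
Qed.

Section Greedy.
Variable n : nat.

Definition needier (g : 'I_n -> nat) : rel 'I_n :=
  fun j i => (g i < g j) || ((g j == g i) && (j < i)).

Lemma needier_irr g : irreflexive (needier g).
Proof. by move=> i; rewrite /needier ltnn eqxx ltnn. Qed.

Lemma needier_trans g : transitive (needier g).
Proof.
move=> i k j; rewrite /needier.
by move=> /orP[? | /andP[/eqP ? ?]] /orP[? | /andP[/eqP ? ?]]; apply/orP; lia.
Qed.

Lemma needier_total g i j : i != j -> needier g i j || needier g j i.
Proof.
rewrite /needier -val_eqE /= => ne_ij.
by case: (ltngtP (g i) (g j)); lia.
Qed.

Definition need_perm g : {perm 'I_n} :=
  rank_perm (@needier_irr g) (@needier_trans g) (@needier_total g).

Lemma need_perm_anti g i j : g j < g i -> need_perm g i < need_perm g j.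
Proof.
move=> lt_ji; rewrite !rank_permE; apply: rank_mono (@needier_trans g) _ _ _.
by rewrite /needier /= lt_ji.
Qed.

Lemma need_perm_threshold g v :
  let served := [set i | need_perm g i < v] in
  let needy := [set i | v <= g i] in
  served \subset needy \/ needy \subset served.
Proof.
move=> served needy.
case: (boolP (served \subset needy)) => [|/subsetPn]; first by left.
case=> j; rewrite !inE -ltnNge => served_j lt_gj_v; right.
apply/subsetP => i; rewrite !inE => le_v_gi.
exact: ltn_trans (need_perm_anti (leq_trans lt_gj_v le_v_gi)) served_j.
Qed.

(* [best t i] is the (0-based) index of the best item player i received on the
   first t days; n stands for "nothing received yet". *)
Fixpoint best (t : nat) : 'I_n -> nat :=
  if t is t'.+1 then fun i => minn (best t' i) (need_perm (best t') i)
  else fun _ => n.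

Definition greedy (t : nat) : {perm 'I_n} := need_perm (best t).

Lemma bestS t i : best t.+1 i = minn (best t i) (greedy t i).
Proof. by []. Qed.

Lemma best_attained t i : 0 < t -> exists2 d, d < t & best t i = greedy d i.
Proof.
elim: t => [//|[|t] IH] _.
  by exists 0; rewrite // /greedy /=; apply/minn_idPr/ltnW.
have [d lt_dt best_ti] := IH isT.
rewrite bestS best_ti /minn.
by case: ltnP => _; [exists d; first lia | exists t.+1].
Qed.

Lemma card_best_step t v : v <= n ->
  #|[set i | v <= best t.+1 i]| <= #|[set i | v <= best t i]| - v.
Proof.
move=> le_vn.
have -> : [set i | v <= best t.+1 i] =
          [set i | v <= best t i] :\: [set i | need_perm (best t) i < v].
  by apply/setP => i; rewrite !inE leq_min -leqNgt andbC.
rewrite cardsD; case: (need_perm_threshold (best t) v) => sub.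
  by rewrite (setIidPr sub) card_perm_lt.
by rewrite (setIidPl sub) subnn leq0n.
Qed.

Lemma card_best_ge t v : v <= n -> #|[set i | v <= best t i]| <= n - v * t.
Proof.
move=> le_vn; elim: t => [|t IH].
  by rewrite muln0 subn0 -[X in _ <= X]card_ord max_card.
by apply: leq_trans (card_best_step t le_vn) _; rewrite mulnS; lia.
Qed.

Lemma best_mul_lt t i : 0 < t -> best t i * t < n.
Proof.
move=> t_gt0; have [d _ best_ti] := best_attained i t_gt0.
have le_best_n : best t i <= n by rewrite best_ti ltnW.
have := card_best_ge t le_best_n.
have : 0 < #|[set j | best t i <= best t j]|.
  by apply/card_gt0P; exists i; rewrite inE.
lia.
Qed.

End Greedy.

Lemma ceil_div_gt m t a : 0 < t -> m * t < a -> m < ceil_div a t.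
Proof. by move=> t_gt0 lt_mt_a; rewrite /ceil_div leq_divRL // mulSn; lia. Qed.

Lemma Zth1_le n (pi : 'I_n -> {perm 'I_n}) t i (d : 'I_n) :
  d < t -> Zth pi t i 1 <= item_of (pi d i).
Proof.
move=> lt_dt; have : item_of (pi d i) \in sort leq (Zseq pi t i).
  rewrite mem_sort; apply/mapP; exists d => //.
  by rewrite mem_filter lt_dt mem_enum.
rewrite /Zth; case: (sort _ _) (sort_sorted leq_total (Zseq pi t i)) => //=.
move=> a s s_sorted.
rewrite inE => /predU1P [-> // | in_s].
by have /allP := order_path_min leq_trans s_sorted; apply.
Qed.

Theorem mainTheorem1 (n : nat) (hn : 0 < n) :
  exists pi : 'I_n -> {perm 'I_n}, top_balanced pi.
Proof.
exists (fun d : 'I_n => greedy n d) => t i /andP [t_gt0 le_tn].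
have [d lt_dt best_ti] := best_attained i t_gt0.
have lt_dn : d < n by apply: leq_trans le_tn.
apply: leq_trans (Zth1_le _ i (d := Ordinal lt_dn) lt_dt) _.
by rewrite /item_of /= -best_ti; apply: ceil_div_gt => //; apply: best_mul_lt.
Qed.
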